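(* Let $\ell$ be a label, $A,B$ types and $\rho_{11},\rho_{12},\rho_{21},\rho_{22}$ rows such that all concatenations below are defined. If $\rho_{11}\odot(\ell{:}A;\cdot)\odot\rho_{12} \simeq \rho_{21}\odot(\ell{:}B;\cdot)\odot\rho_{22}$ and $\ell \notin \mathit{dom}(\rho_{11})\cup\mathit{dom}(\rho_{21})$, then $A \simeq B$ and $\rho_{11}\odot\rho_{12} \simeq \rho_{21}\odot\rho_{22}$.
   Context: Types and rows share one grammar: $A,B,C,\rho ::= X \mid \alpha \mid \star \mid \iota \mid A\to B \mid \forall X{:}K.\,A \mid [\rho] \mid \langle\rho\rangle \mid \cdot \mid \ell{:}A;\rho$, where $X$ ranges over type variables (bound by $\forall$), $\alpha$ over type names, $\star$ is the dynamic type (also serving as the dynamic row), $\iota$ over base types, $[\rho]$ and $\langle\rho\rangle$ are record and variant types, $\cdot$ is the empty row, $\ell$ ranges over labels, and $K\in\{\mathsf T,\mathsf R\}$ is a kind. Types are identified up to renaming of bound variables; $\mathit{ftv}(A)$ is the set of free type variables. Row matching $\rho \triangleright_\ell A,\rho'$ is defined by: $(\ell{:}A;\rho)\triangleright_\ell A,\rho$; if $\ell'\neq\ell$ and $\rho\triangleright_\ell A,\rho'$ then $(\ell'{:}B;\rho)\triangleright_\ell A,(\ell'{:}B;\rho')$; and $\star\triangleright_\ell \star,\star$. $\mathbf{QPoly}(A)$ holds iff $A$ is not of the form $\forall X{:}K.\,B$ and $\star$ occurs in $A$. Row concatenation $\rho_1\odot\rho_2$ is defined only when $\rho_1=\ell_1{:}A_1;\dots;\ell_n{:}A_n;\cdot$,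 and then equals $\ell_1{:}A_1;\dots;\ell_n{:}A_n;\rho_2$. $\mathit{dom}(\rho)$ is the set of labels in the top-level label prefix of $\rho$. Consistency $\simeq$ is defined inductively: $A\simeq A$; $\star\simeq A$; $A\simeq\star$; $A_1\to A_2\simeq B_1\to B_2$ if $A_1\simeq B_1$ and $A_2\simeq B_2$; $\forall X{:}K.A\simeq\forall X{:}K.B$ if $A\simeq B$; $\forall X{:}K.A\simeq B$ if $\mathbf{QPoly}(B)$, $X\notin\mathit{ftv}(B)$ and $A\simeq B$; $A\simeq\forall X{:}K.B$ if $\mathbf{QPoly}(A)$, $X\notin\mathit{ftv}(A)$ and $A\simeq B$; $[\rho_1]\simeq[\rho_2]$ and $\langle\rho_1\rangle\simeq\langle\rho_2\rangle$ if $\rho_1\simeq\rho_2$; $\ell{:}A;\rho_1\simeq B$ if $B\triangleright_\ell B',\rho_2$, $A\simeq B'$ and $\rho_1\simeq\rho_2$; $A\simeq \ell{:}B;\rho_2$ if $A\triangleright_\ell A',\rho_1$, $A'\simeq B$ and $\rho_1\simeq\rho_2$. *)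

(* Types and rows in one grammar, bound type variables as
   de Bruijn indices (so types are identified up to alpha-renaming). *)
From Stdlib Require Import List Arith.
Import ListNotations.

Definition label := nat.
Definition tyname := nat.
Definition basety := nat.

Inductive kind : Type := KT | KR.

Inductive ty : Type :=
  | TVar  : nat -> ty
  | TName : tyname -> ty
  | TDyn  : ty
  | TBase : basety -> ty
  | TArr  : ty -> ty -> ty
  | TAll  : kind -> ty -> ty
  | TRec  : ty -> ty
  | TVariant : ty -> ty
  | TEmpty : ty
  | TExt  : label -> ty -> ty -> ty.

Fixpoint shift (c : nat) (A : ty) : ty :=
  match A with
  | TVar n => if Nat.ltb n c then TVar n else TVar (S n)
  | TName a => TName a
  | TDyn => TDyn
  | TBase i => TBase i
  | TArr A1 A2 => TArr (shift c A1) (shift c A2)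
  | TAll K A1 => TAll K (shift (S c) A1)
  | TRec r => TRec (shift c r)
  | TVariant r => TVariant (shift c r)
  | TEmpty => TEmpty
  | TExt l A1 r => TExt l (shift c A1) (shift c r)
  end.

Fixpoint dyn_occurs (A : ty) : Prop :=
  match A with
  | TDyn => True
  | TArr A1 A2 => dyn_occurs A1 \/ dyn_occurs A2
  | TAll _ A1 => dyn_occurs A1
  | TRec r => dyn_occurs r
  | TVariant r => dyn_occurs r
  | TExt _ A1 r => dyn_occurs A1 \/ dyn_occurs r
  | _ => False
  end.

Definition is_forall (A : ty) : Prop :=
  match A with TAll _ _ => True | _ => False end.

Definition QPoly (A : ty) : Prop := ~ is_forall A /\ dyn_occurs A.

Inductive rmatch : ty -> label -> ty -> ty -> Prop :=
  | RM_head : forall l A r, rmatch (TExt l A r) l A r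
  | RM_skip : forall l l' A B r r', l' <> l -> rmatch r l A r' ->
      rmatch (TExt l' B r) l A (TExt l' B r')
  | RM_dyn : forall l, rmatch TDyn l TDyn TDyn.

(* consistency.  The side condition X notin ftv(B) of the quantifier rules is
   realised in de Bruijn form by comparing the body against B shifted past
   the new binder. *)
Inductive consistent : ty -> ty -> Prop :=
  | C_refl : forall A, consistent A A
  | C_dynL : forall A, consistent TDyn A
  | C_dynR : forall A, consistent A TDyn
  | C_arr : forall A1 A2 B1 B2, consistent A1 B1 -> consistent A2 B2 ->
      consistent (TArr A1 A2) (TArr B1 B2)
  | C_all : forall K A B, consistent A B -> consistent (TAll K A) (TAll K B)
  | C_allL : forall K A B, QPoly B -> consistent A (shift 0 B) ->
      consistent (TAll K A) B
  | C_allR : forall K A B, QPoly A -> consistent (shift 0 A) B ->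
      consistent A (TAll K B)
  | C_rec : forall r1 r2, consistent r1 r2 -> consistent (TRec r1) (TRec r2)
  | C_var : forall r1 r2, consistent r1 r2 ->
      consistent (TVariant r1) (TVariant r2)
  | C_extL : forall l A r1 B B' r2, rmatch B l B' r2 -> consistent A B' ->
      consistent r1 r2 -> consistent (TExt l A r1) B
  | C_extR : forall l A A' r1 B r2, rmatch A l A' r1 -> consistent A' B ->
      consistent r1 r2 -> consistent A (TExt l B r2).

Notation "A ~= B" := (consistent A B) (at level 70).

Fixpoint closed_row (r : ty) : Prop :=
  match r with
  | TEmpty => True
  | TExt _ _ r' => closed_row r'
  | _ => False
  end.

(* row concatenation; only meaningful (defined in the paper) when the first
   argument is a closed row, which is always assumed where it is used *)
Fixpoint rconcat (r1 r2 : ty) : ty :=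
  match r1 with
  | TEmpty => r2
  | TExt l A r => TExt l A (rconcat r r2)
  | _ => r1
  end.

Fixpoint dom (r : ty) : list label :=
  match r with
  | TExt l _ r' => l :: dom r'
  | _ => []
  end.

(* Matching a row against a label is a partial function, and matches at two
   distinct labels commute.  Consequently consistency is stable under matching
   both sides at the same label: the field types and the residual rows remain
   consistent.  Since [l] does not occur in the closed prefixes, the two
   concatenated rows match [l] with field types [A], [B] and residual rows
   [r11 ⊙ r12], [r21 ⊙ r22]. *)
From Stdlib Require Import List.

Lemma rmatch_functional R l A1 r1 A2 r2 :
  rmatch R l A1 r1 -> rmatch R l A2 r2 -> A1 = A2 /\ r1 = r2.
Proof.
  intros M1; revert A2 r2.
  induction M1 as [l A r | l l' A B r r' Hne M IH | l]; intros A2 r2 M2;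
    inversion M2; subst; try congruence; auto.
  match goal with Hm : rmatch r l A2 _ |- _ => destruct (IH _ _ Hm) end.
  subst; auto.
Qed.

Lemma rmatch_swap R l1 A1 r1 l2 A2 r2 :
  l1 <> l2 -> rmatch R l1 A1 r1 -> rmatch R l2 A2 r2 ->
  exists r, rmatch r1 l2 A2 r /\ rmatch r2 l1 A1 r.
Proof.
  intros Hne M1; revert r2.
  induction M1 as [l A r | l l' A B r r' Hne' M IH | l]; intros r2 M2;
    inversion M2; subst.
  - congruence.
  - eexists; split; [eassumption | constructor].
  - eexists; split; [constructor | eassumption].
  - match goal with Hm : rmatch r l2 A2 _ |- _ =>
      destruct (IH Hne _ Hm) as [s [Ms1 Ms2]] end.
    exists (TExt l' B s); split; constructor; assumption.
  - exists TDyn; split; constructor.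
Qed.

Lemma consistent_rmatch R1 R2 :
  R1 ~= R2 -> forall l A1 r1 A2 r2,
  rmatch R1 l A1 r1 -> rmatch R2 l A2 r2 -> A1 ~= A2 /\ r1 ~= r2.
Proof.
  induction 1 as [R | R | R | | | | | | |
                  l' C t1 D D' t2 MD HC _ Ht IH
                 | l' C C' t1 D t2 MC HD _ Ht IH];
    intros l X1 s1 X2 s2 M1 M2;
    try solve [inversion M1 | inversion M2].
  - destruct (rmatch_functional _ _ _ _ _ _ M1 M2); subst; split; constructor.
  - inversion M1; subst; split; constructor.
  - inversion M2; subst; split; constructor.
  - inversion M1 as [| ? ? ? ? ? s1' Hne Ms1 |]; subst.
    + destruct (rmatch_functional _ _ _ _ _ _ MD M2); subst; split; assumption.
    + destruct (rmatch_swap _ _ _ _ _ _ _ Hne MD M2) as [s [Ms2 Mr2]].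
      destruct (IH _ _ _ _ _ Ms1 Ms2).
      split; [assumption | eapply C_extL; eassumption].
  - inversion M2 as [| ? ? ? ? ? s2' Hne Ms2 |]; subst.
    + destruct (rmatch_functional _ _ _ _ _ _ MC M1); subst; split; assumption.
    + destruct (rmatch_swap _ _ _ _ _ _ _ Hne MC M1) as [s [Ms1 Mr1]].
      destruct (IH _ _ _ _ _ Ms1 Ms2).
      split; [assumption | eapply C_extR; eassumption].
Qed.

Lemma rmatch_rconcat r l A r' :
  closed_row r -> ~ In l (dom r) ->
  rmatch (rconcat r (TExt l A r')) l A (rconcat r r').
Proof.
  induction r; simpl; intros Hclosed Hl; try contradiction.
  - constructor.
  - constructor; auto.
Qed.

Theorem mainTheorem9 (l : label) (A B r11 r12 r21 r22 : ty) :
  closed_row r11 -> closed_row r21 ->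
  rconcat r11 (rconcat (TExt l A TEmpty) r12)
    ~= rconcat r21 (rconcat (TExt l B TEmpty) r22) ->
  ~ In l (dom r11 ++ dom r21) ->
  A ~= B /\ rconcat r11 r12 ~= rconcat r21 r22.
Proof.
  intros Hr11 Hr21 Hcons Hl; simpl in Hcons.
  assert (Hl11 : ~ In l (dom r11)) by (intro; apply Hl, in_or_app; auto).
  assert (Hl21 : ~ In l (dom r21)) by (intro; apply Hl, in_or_app; auto).
  exact (consistent_rmatch _ _ Hcons _ _ _ _ _
           (rmatch_rconcat _ _ _ _ Hr11 Hl11) (rmatch_rconcat _ _ _ _ Hr21 Hl21)).
Qed.
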